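(* Let $u\in(0,1)$ and $w\in(0,1]$. For $R>1$ let $$\varphi_R(p)=2(1-uR)w\,p^2+\big(uw(R+1)-2u-2w\big)p+u .$$ Since $\varphi_R(0)=u>0$ and $\varphi_R(1)=-u(1-w+Rw)<0$, this polynomial has a unique root in $[0,1]$; call it $p(R)$. Then $R\mapsto p(R)$ is strictly increasing on $(1,\infty)$, and $p(R)\uparrow 1/2$ as $R\to\infty$.
   Context: $p(R)$ is the fraction of cooperators at any non-zero metastable equilibrium of a population playing a public goods game. In that game $u$ is the mutation rate, $w$ is the cost of cooperation, and $R$ is the multiplication factor. *)

From HB Require Import structures.
From mathcomp Require Import all_boot all_order all_algebra.
From mathcomp Require Import all_classical all_reals all_analysis.
Set Implicit Arguments. Unset Strict Implicit. Unset Printing Implicit Defensive.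
Import Order.TTheory GRing.Theory Num.Theory.
Local Open Scope ring_scope.

Definition phi {R : realType} (u w r p : R) : R :=
  2 * (1 - u * r) * w * p ^+ 2 + (u * w * (r + 1) - 2 * u - 2 * w) * p + u.

From mathcomp Require Import all_boot all_order all_algebra.
From mathcomp Require Import all_classical all_reals all_analysis.
From mathcomp Require Import ring lra.
Set Implicit Arguments. Unset Strict Implicit. Unset Printing Implicit Defensive.
Import Order.TTheory GRing.Theory Num.Theory.
Import numFieldNormedType.Exports.
Local Open Scope classical_set_scope.
Local Open Scope ring_scope.

(** A quadratic [q] with [q 0 > 0 > q 1] has a unique root [x] in [[0, 1]], and
    [q p = (p - x) * (a (p + x) + b)] with the second factor negative on [[0, 1]],
    so there the sign of [q p] tells on which side of [x] the point [p] lies.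
    Now [phi_R (1/2) = - w (1 - u) / 2 < 0] for every [R], whence [p(R) < 1/2], and
    [phi_R p] is affine in [R] with slope [u w p (1 - 2 p)], positive for [p] in
    [(0, 1/2)].  So [R < R'] gives [phi_R' (p(R)) > 0], i.e. [p(R) < p(R')], and for a
    fixed [q < 1/2] eventually [phi_R q > 0], i.e. [q < p(R)]. *)

Definition quad {R : pzRingType} (a b c x : R) : R := a * x ^+ 2 + b * x + c.

Lemma quadB {R : comPzRingType} (a b c p x : R) :
  quad a b c p - quad a b c x = (p - x) * (a * (p + x) + b).
Proof. by rewrite /quad; ring. Qed.

Section QuadraticRoot.
Variables (R : realFieldType) (a b c : R).
Hypotheses (quad0_gt0 : 0 < quad a b c 0) (quad1_lt0 : quad a b c 1 < 0).
Variable x : R.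
Hypotheses (x01 : 0 <= x <= 1) (quad_x : quad a b c x = 0).

Lemma quad_slope_lt0 (p : R) : 0 <= p <= 1 -> a * (p + x) + b < 0.
Proof.
move: quad0_gt0 quad1_lt0 x01; rewrite /quad => q0 q1 /andP[x0 x1] /andP[p0 p1].
have slope0 : a * (0 + x) + b < 0.
  have := quadB a b c 0 x; rewrite quad_x /quad; nra.
have slope1 : a * (1 + x) + b < 0.
  have := quadB a b c 1 x; rewrite quad_x /quad; nra.
(* the slope is affine in [p], so it is negative between its values at 0 and 1 *)
have -> : a * (p + x) + b = (1 - p) * (a * (0 + x) + b) + p * (a * (1 + x) + b).
  by ring.
have : (1 - p) * (a * (0 + x) + b) <= 0 by apply: mulr_ge0_le0; lra.
move: p0; rewrite le_eqVlt => /predU1P[<-|p_gt0]; first lra.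
by rewrite -(pmulr_rlt0 _ p_gt0) in slope1; lra.
Qed.

Lemma quad_factor (p : R) : quad a b c p = (p - x) * (a * (p + x) + b).
Proof. by rewrite -(quadB a b c) quad_x subr0. Qed.

Lemma quad_root_unique (p : R) : 0 <= p <= 1 -> quad a b c p = 0 -> p = x.
Proof.
move=> p01; rewrite quad_factor => /eqP.
by rewrite mulf_eq0 subr_eq0 (lt_eqF (quad_slope_lt0 p01)) orbF => /eqP.
Qed.

Lemma quad_gt0_lt_root (p : R) : 0 <= p <= 1 -> 0 < quad a b c p -> p < x.
Proof. by move=> p01; rewrite quad_factor; have := quad_slope_lt0 p01; nra. Qed.

Lemma quad_lt0_gt_root (p : R) : 0 <= p <= 1 -> quad a b c p < 0 -> x < p.
Proof. by move=> p01; rewrite quad_factor; have := quad_slope_lt0 p01; nra. Qed.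

End QuadraticRoot.

Lemma quad_root_exists (R : realType) (a b c : R) :
  0 < quad a b c 0 -> quad a b c 1 < 0 ->
  exists2 x, 0 <= x <= 1 & quad a b c x = 0.
Proof.
move=> q0 q1.
have quad_cont : continuous (quad a b c).
  have -> : quad a b c = horner (a *: 'X^2 + b *: 'X + c%:P).
    by apply/funext => y; rewrite /quad !hornerE.
  exact: continuous_horner.
have [|x] := IVT ler01 (continuous_subspaceT quad_cont) (v := 0).
  by rewrite ge_min le_max; apply/andP; split; apply/orP; lra.
by rewrite in_itv /=; exists x.
Qed.

Section PublicGoodsRoot.
Variables (R : realType) (u w : R).
Hypotheses (u_gt0 : 0 < u) (u_lt1 : u < 1) (w_gt0 : 0 < w) (w_le1 : w <= 1).

Lemma phiE (r : R) :
  phi u w r = quad (2 * (1 - u * r) * w) (u * w * (r + 1) - 2 * u - 2 * w) u.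
Proof. by []. Qed.

Lemma phi0_gt0 (r : R) : 0 < phi u w r 0.
Proof. by rewrite /phi expr0n /= !mulr0 !add0r. Qed.

Lemma phi1_lt0 (r : R) : 0 < r -> phi u w r 1 < 0.
Proof.
move=> r_gt0; have -> : phi u w r 1 = - (u * (1 - w + r * w)) by rewrite /phi; ring.
rewrite oppr_lt0 mulr_gt0 //; have := mulr_gt0 r_gt0 w_gt0.
have : 0 <= 1 - w by rewrite subr_ge0.
lra.
Qed.

Lemma phi_half (r : R) : phi u w r 2^-1 = - (w * (1 - u)) / 2.
Proof. by rewrite /phi; field. Qed.

Lemma phi_affine (r' r p : R) :
  phi u w r p = phi u w r' p + (r - r') * (u * w * p * (1 - 2 * p)).
Proof. by rewrite /phi; ring. Qed.

Lemma phi_root_exists (r : R) : 0 < r -> exists2 x, 0 <= x <= 1 & phi u w r x = 0.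
Proof.
move=> r_gt0; rewrite phiE.
by apply: quad_root_exists; rewrite -phiE; [apply: phi0_gt0 | apply: phi1_lt0].
Qed.

Section Root.
Variables (r x : R).
Hypotheses (r_gt0 : 0 < r) (x01 : 0 <= x <= 1) (phi_x : phi u w r x = 0).

Lemma phi_root_unique (y : R) : 0 <= y <= 1 -> phi u w r y = 0 -> y = x.
Proof. exact: (quad_root_unique (phi0_gt0 r) (phi1_lt0 r_gt0) x01 phi_x). Qed.

Lemma phi_gt0_lt_root (y : R) : 0 <= y <= 1 -> 0 < phi u w r y -> y < x.
Proof. exact: (quad_gt0_lt_root (phi0_gt0 r) (phi1_lt0 r_gt0) x01 phi_x). Qed.

Lemma phi_root_lt_half : x < 2^-1.
Proof.
apply: (quad_lt0_gt_root (phi0_gt0 r) (phi1_lt0 r_gt0) x01 phi_x); first lra.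
have : 0 < w * (1 - u) by rewrite mulr_gt0 // subr_gt0.
by rewrite -phiE phi_half; lra.
Qed.

Lemma phi_root_gt0 : 0 < x.
Proof.
rewrite lt_neqAle; case/andP: x01 => -> _; rewrite andbT.
by apply/eqP => x0; move: phi_x; rewrite -x0; have := phi0_gt0 r; lra.
Qed.

End Root.

Lemma phi_root_increasing (r1 r2 x1 x2 : R) : 0 < r1 -> r1 < r2 ->
  0 <= x1 <= 1 -> phi u w r1 x1 = 0 -> 0 <= x2 <= 1 -> phi u w r2 x2 = 0 ->
  x1 < x2.
Proof.
move=> r1_gt0 r12 x1_01 phi_x1 x2_01 phi_x2.
apply: (phi_gt0_lt_root (lt_trans r1_gt0 r12) x2_01 phi_x2 x1_01).
rewrite (phi_affine r1) phi_x1 add0r.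
have x1_gt0 := phi_root_gt0 x1_01 phi_x1.
have x1_lt_half := phi_root_lt_half r1_gt0 x1_01 phi_x1.
rewrite mulr_gt0 ?subr_gt0 // mulr_gt0 ?mulr_gt0 //; lra.
Qed.

Lemma phi_eventually_gt0 (q : R) :
  0 < q < 2^-1 -> \forall r \near +oo, 0 < phi u w r q.
Proof.
move=> /andP[q_gt0 q_lt_half].
have slope_gt0 : 0 < u * w * q * (1 - 2 * q).
  by do ?apply: mulr_gt0 => //; lra.
near=> r; rewrite (phi_affine 0) subr0 -ltrBlDl sub0r -ltr_pdivrMr //.
near: r; exact: nbhs_pinfty_gt (num_real _).
Unshelve. all: by end_near.
Qed.

Lemma phi_root_cvg_half (p : R -> R) :
  (forall r : R, 1 < r -> 0 <= p r <= 1 /\ phi u w r (p r) = 0) ->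
  p r @[r --> +oo] --> (2^-1 : R).
Proof.
move=> p_root; apply/cvgrPdist_lt => e e_gt0.
pose q := Num.max 4^-1 (2^-1 - e / 2).
have [q_ge_quarter q_ge] : 4^-1 <= q /\ 2^-1 - e / 2 <= q.
  by split; rewrite le_max lexx ?orbT.
have q_lt_half : q < 2^-1 by rewrite gt_max; apply/andP; split; lra.
near=> r.
have r_gt1 : 1 < r by near: r; exact: nbhs_pinfty_gt (num_real _).
have [p01 phi_p] := p_root r r_gt1; have r_gt0 : 0 < r by lra.
have q_lt_p : q < p r.
  apply: (phi_gt0_lt_root r_gt0 p01 phi_p); first by apply/andP; split; lra.
  by near: r; apply: phi_eventually_gt0; apply/andP; split; lra.
have p_lt_half := phi_root_lt_half r_gt0 p01 phi_p.
by rewrite ger0_norm; lra.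
Unshelve. all: by end_near.
Qed.

End PublicGoodsRoot.

Theorem mainTheorem2 (R : realType) (u w : R)
  (hu0 : 0 < u) (hu1 : u < 1) (hw0 : 0 < w) (hw1 : w <= 1) :
  (forall r : R, 1 < r ->
     exists! x : R, (0 <= x <= 1) /\ phi u w r x = 0) /\
  (forall p : R -> R,
     (forall r : R, 1 < r -> (0 <= p r <= 1) /\ phi u w r (p r) = 0) ->
     (forall r1 r2 : R, 1 < r1 -> r1 < r2 -> p r1 < p r2) /\
     (p r @[r --> +oo] --> (2^-1 : R))).
Proof.
split.
  move=> r r_gt1; have r_gt0 : 0 < r by lra.
  have [x x01 phi_x] := phi_root_exists hu0 hw0 hw1 r_gt0.
  exists x; split=> // y [y01 phi_y].
  by rewrite (phi_root_unique hu0 hw0 hw1 r_gt0 x01 phi_x y01 phi_y).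
move=> p p_root; split; last exact (phi_root_cvg_half hu0 hu1 hw0 hw1 p_root).
move=> r1 r2 r1_gt1 r12; have r2_gt1 : 1 < r2 by lra.
have [x1_01 phi_x1] := p_root r1 r1_gt1; have [x2_01 phi_x2] := p_root r2 r2_gt1.
by apply: (phi_root_increasing hu0 hu1 hw0 hw1 _ r12 x1_01 phi_x1 x2_01 phi_x2); lra.
Qed.
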